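(* Under the standing assumptions below, $W$ is a Foster–Lyapunov function: for every $\eta\in\Theta$, $$LW(\eta)\le\mathbf b\langle h\rangle-\tfrac12W(\eta),$$ where $\langle h\rangle=\int_{\mathbb R^d}h(x)dx$.
   Context: Fix $d\in\mathbb N$, $\varepsilon>0$, $G(x)=(1+|x|)^{-d-\varepsilon}$. $\Gamma$ is the set of locally finite subsets of $\mathbb R^d$; $\Gamma_G=\{\gamma\in\Gamma:\sum_{x\in\gamma}G(x)<\infty\}$. Let $b:\mathbb R^d\times\Gamma_G\to[0,\infty)$ be measurable with $\mathbf b:=\sup_{x,\eta}b(x,\eta)<\infty$. The operator $L$ acts on functions $F$ on configurations by $$LF(\eta)=\sum_{x\in\eta}\bigl(F(\eta\setminus\{x\})-F(\eta)\bigr)+\int_{\mathbb R^d}b(x,\eta)\bigl(F(\eta\cup\{x\})-F(\eta)\bigr)dx.$$ Let $K:(0,\infty)\to(0,\infty)$ be non-increasing with $\lim_{q\to0+}K(q)=\infty$ and $\int_r^\infty K(q)q^{d-1}dq<\infty$ for every $r>0$. Let $\phi,h:\mathbb R^d\to(0,\infty)$ be measurable, separated from $0$ on every compact set, with $C_1:=\sup_{x}\int_{\mathbb R^d}\phi(y)K(|x-y|)dy<\infty$ and $2C_1\mathbf b\,\phi(x)\le h(x)\le G(x)$ for all $x$. Set $\psi(x,y)=\phi(x)\phi(y)K(|x-y|)$ ($x\ne y$), $V(\eta)=\sum_{\{x,y\}\subset\eta}\psi(x,y)$ (sum over unordered pairs of distinct points), $\langle h,\eta\rangle=\sum_{x\in\eta}h(x)$,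 $W(\eta)=\langle h,\eta\rangle+V(\eta)\in[0,\infty]$, and $\Theta=\{\eta\in\Gamma_G:V(\eta)<\infty\}$. *)

From HB Require Import structures.
From mathcomp Require Import all_boot all_order all_algebra.
From mathcomp Require Import all_classical all_reals all_analysis.
Set Implicit Arguments.
Unset Strict Implicit.
Unset Printing Implicit Defensive.
Import Order.TTheory GRing.Theory Num.Theory.
Import numFieldNormedType.Exports.
Local Open Scope classical_set_scope.
Local Open Scope ring_scope.

Section Defs.
Variables (R : realType) (d : nat).

(* points of R^d are d-tuples of reals (measurable structure: product of Borel) *)
Definition Rd := d.-tuple R.

Definition enorm (x : Rd) : R := Num.sqrt (\sum_(i < d) (tnth x i) ^+ 2).
Definition edist (x y : Rd) : R :=
  Num.sqrt (\sum_(i < d) (tnth x i - tnth y i) ^+ 2).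

(* Lebesgue measure on R^d, characterised by its values on closed boxes *)
Definition is_lebesgue_Rd (mu : {measure set Rd -> \bar R}) : Prop :=
  forall a b : Rd, (forall i, tnth a i <= tnth b i) ->
    mu [set x : Rd | forall i, tnth a i <= tnth x i <= tnth b i]
    = (\prod_(i < d) (tnth b i - tnth a i))%:E.

(* locally finite configurations: finitely many points in every ball *)
Definition Gamma : set (set Rd) :=
  [set eta | forall r : R, finite_set (eta `&` [set x | enorm x <= r])].

Definition Gfun (eps : R) (x : Rd) : R := (1 + enorm x) `^ (- (d%:R + eps)).

Definition GammaG (eps : R) : set (set Rd) :=
  [set eta | Gamma eta /\ (\esum_(x in eta) (Gfun eps x)%:E < +oo)%E].

Definition ssum (T : choiceType) (D : set T) (f : T -> \bar R) : \bar R :=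
  (\esum_(x in D) (f^\+ x) - \esum_(x in D) (f^\- x))%E.

Definition psi (phi : Rd -> R) (K : R -> R) (x y : Rd) : R :=
  phi x * phi y * K (edist x y).

(* V(eta) = sum over unordered pairs {x,y} of distinct points
          = 1/2 * sum over ordered pairs (x,y), x <> y (psi is symmetric) *)
Definition Vfun (phi : Rd -> R) (K : R -> R) (eta : set Rd) : \bar R :=
  ((2^-1)%:E * \esum_(p in [set p : Rd * Rd | eta p.1 /\ eta p.2 /\ p.1 <> p.2])
      (psi phi K p.1 p.2)%:E)%E.

Definition pairing (h : Rd -> R) (eta : set Rd) : \bar R :=
  \esum_(x in eta) (h x)%:E.

Definition Wfun (h phi : Rd -> R) (K : R -> R) (eta : set Rd) : \bar R :=
  (pairing h eta + Vfun phi K eta)%E.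

Definition Theta (eps : R) (phi : Rd -> R) (K : R -> R) : set (set Rd) :=
  [set eta | GammaG eps eta /\ (Vfun phi K eta < +oo)%E].

Definition Lgen (mu : {measure set Rd -> \bar R}) (b : Rd -> set Rd -> R)
  (F : set Rd -> \bar R) (eta : set Rd) : \bar R :=
  (ssum eta (fun x => F (eta `\ x) - F eta)
   + \int[mu]_x ((b x eta)%:E * (F (eta `|` [set x]) - F eta)))%E.

Definition bsup (eps : R) (b : Rd -> set Rd -> R) : \bar R :=
  ereal_sup [set e | exists x eta, GammaG eps eta /\ e = (b x eta)%:E].

Definition C1 (mu : {measure set Rd -> \bar R}) (phi : Rd -> R) (K : R -> R) : \bar R :=
  ereal_sup [set e | exists x : Rd,
     e = (\int[mu]_y (phi y * K (edist x y))%:E)%E].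

End Defs.

From Pilot Require Import Defs.
From HB Require Import structures.
From mathcomp Require Import all_boot all_order all_algebra.
From mathcomp Require Import all_classical all_reals all_analysis.
From mathcomp Require Import measurable_realfun.
From mathcomp Require Import lra.
Set Implicit Arguments.
Unset Strict Implicit.
Unset Printing Implicit Defensive.
Import Order.TTheory GRing.Theory Num.Theory.
Import numFieldNormedType.Exports.
Local Open Scope classical_set_scope.
Local Open Scope ring_scope.

(* Write W = <h,.> + S/2, where S(eta) is the sum over x in eta of the
   interaction of x with the other points, so that S = 2V.  Removing a point
   x of eta lowers W by h(x) plus the interaction of x, so the death part of
   L W equals -(<h,eta> + S(eta)).  Adding a point x raises W by h(x) plus
   the sum of psi(x,y) over y in eta; integrating against b <= bold b, the
   interaction term contributes at most bold b C_1 sum_y phi(y), which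
   2 C_1 bold b phi <= h bounds by <h,eta>/2.  Hence
   L W <= bold b <h> - <h,eta>/2 - S(eta) <= bold b <h> - W/2. *)

Section extended_sums.
Variables (R : realType) (T : choiceType).
Local Open Scope ereal_scope.

Lemma esumD1 (A : set T) (a : T -> \bar R) x : A x ->
  (forall y, A y -> 0 <= a y) ->
  \esum_(y in A) a y = a x + \esum_(y in A `\ x) a y.
Proof.
move=> Ax a0; rewrite (esumID [set x]) //.
rewrite (_ : A `&` [set x] = [set x]); last first.
  by apply/seteqP; split => y /=; [case|move=> ->].
by rewrite esum_set1 ?setDE //; exact: a0.
Qed.

Lemma ge0_esumZl (A : set T) (a : T -> \bar R) (c : R) :
  (0 <= c)%R -> (forall y, 0 <= a y) ->
  \esum_(y in A) (c%:E * a y) = c%:E * \esum_(y in A) a y.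
Proof.
move=> c0 a0; rewrite /esum -ereal_supZl //; last first.
  by apply/set0P; exists (\sum_(y \in set0) a y); exists set0 => //; exact: fsets_set0.
congr ereal_sup; apply/seteqP; split => _ [F hF <-].
  by exists (\sum_(y \in F) a y); [exists F|rewrite ge0_mule_fsumr].
by move: hF => [G hG <-]; exists G => //; rewrite ge0_mule_fsumr.
Qed.

End extended_sums.

Section nonnegative_integrals.
Variables (d : measure_display) (T : measurableType d) (R : realType).
Variable mu : {measure set T -> \bar R}.
Local Open Scope ereal_scope.

(* No measurability is needed: the integral of a nonnegative function is the
   supremum of the integrals of the simple functions below it. *)
Lemma ge0_le_integralT (f g : T -> \bar R) :
  (forall x, 0 <= f x) -> (forall x, f x <= g x) ->
  \int[mu]_x f x <= \int[mu]_x g x.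
Proof.
move=> f0 fg.
have g0 x : 0 <= g x by exact: le_trans (f0 x) (fg x).
rewrite !ge0_integralTE //; apply: ereal_sup_le => _ [s sf <-].
by exists s => // x; exact: le_trans (sf x) (fg x).
Qed.

Lemma le_integral_off_point (f g : T -> \bar R) (y : T) :
  measurable [set y] -> mu [set y] = 0 ->
  (forall x, 0 <= f x) -> f y = 0 -> g y \is a fin_num ->
  (forall x, x <> y -> f x <= g x) ->
  \int[mu]_x f x <= \int[mu]_x g x.
Proof.
move=> my muy0 f0 fy0 gyfin fg.
have gneg0 : \int[mu]_x g^\- x = 0.
  apply/le_anti; rewrite integral_ge0 ?andbT; last by move=> x _; exact: funeneg_ge0.
  have gnegy x : g^\- x <= (`|fine (g y)| * \1_[set y] x)%:E.
    rewrite funenegE; have [->|xy] := pselect (x = y).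
      rewrite indicE mem_set // mulr1 ge_max lee_fin normr_ge0 andbT.
      by rewrite -(fineK gyfin) -EFinN lee_fin -normrN ler_norm.
    rewrite indicE memNset // mulr0 ge_max lexx andbT leeNl oppe0.
    exact: le_trans (f0 x) (fg x xy).
  apply: le_trans (ge0_le_integralT (fun x => funeneg_ge0 g x) gnegy) _.
  under eq_integral do rewrite EFinM.
  rewrite ge0_integralZl_EFin //; last first.
    by apply/measurable_EFinP; exact: measurable_indic.
  by rewrite integral_indic // setIT muy0 mule0.
rewrite [leRHS]integralE gneg0 sube0; apply: ge0_le_integralT => // x.
rewrite funeposE le_max; have [->|xy] := pselect (x = y).
  by rewrite fy0 lexx orbT.
by rewrite fg.
Qed.

End nonnegative_integrals.

Section euclidean_space.
Variables (R : realType) (d : nat).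
Local Notation Rd := (Rd R d).
Local Notation edist := (@Defs.edist R d).

Lemma edistC (x y : Rd) : edist x y = edist y x.
Proof.
rewrite /Defs.edist; congr Num.sqrt; apply: eq_bigr => i _.
by rewrite -sqrrN opprB.
Qed.

Lemma edistxx (x : Rd) : edist x x = 0.
Proof. by rewrite /Defs.edist big1 ?sqrtr0// => i _; rewrite subrr expr0n. Qed.

Lemma edist_gt0 (x y : Rd) : x <> y -> 0 < edist x y.
Proof.
move=> xy; rewrite lt_neqAle sqrtr_ge0 andbT eq_sym sqrtr_eq0 -ltNge.
rewrite lt_neqAle sumr_ge0 ?andbT => [|i _]; last exact: sqr_ge0.
apply/eqP => /esym sum0; apply: xy; apply: eq_from_tnth => i; apply/eqP.
rewrite -subr_eq0 -sqrf_eq0; apply/eqP.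
exact: (psumr_eq0P (fun i _ => sqr_ge0 (tnth x i - tnth y i)) sum0).
Qed.

Lemma measurable_edist (y : Rd) : measurable_fun setT (edist ^~ y).
Proof.
apply: measurableT_comp (continuous_measurable_fun (@sqrt_continuous R)) _.
apply: measurable_sum => i; apply: measurable_funX; apply: measurable_funB => //.
exact: measurable_tnth.
Qed.

Lemma measurable_set1_Rd (y : Rd) : measurable [set y].
Proof.
have -> : [set y] = edist ^~ y @^-1` [set 0].
  apply/seteqP; split => x /=; first by move=> ->; rewrite edistxx.
  by move=> dxy; have [//|/edist_gt0] := pselect (x = y); rewrite dxy ltxx.
by rewrite -[X in measurable X]setTI; exact: measurable_edist.
Qed.

Lemma lebesgue_Rd_set1 (mu : {measure set Rd -> \bar R}) :
  (0 < d)%N -> is_lebesgue_Rd mu -> forall y : Rd, mu [set y] = 0%E.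
Proof.
move=> d_gt0 hmu y; have := hmu y y (fun i => lexx _).
have -> : [set x : Rd | forall i, tnth y i <= tnth x i <= tnth y i] = [set y].
  apply/seteqP; split => x /=; last by move=> -> i; rewrite lexx.
  by move=> yxy; apply: eq_from_tnth => i; apply/esym/le_anti/yxy.
move=> ->; rewrite (eq_bigr (fun=> 0)) => [|i _]; last by rewrite subrr.
by rewrite prodr_const card_ord expr0n; case: d d_gt0.
Qed.

End euclidean_space.

Section locally_finite_sums.
Variables (R : realType) (d : nat).
Local Notation Rd := (Rd R d).
Local Open Scope ereal_scope.

Definition cfg_ball (E : set Rd) (n : nat) := E `&` [set x | (enorm x <= n%:R)%R].

Lemma finite_set_enorm_bounded (F : set Rd) : finite_set F ->
  exists n : nat, forall x, F x -> (enorm x <= n%:R)%R.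
Proof.
move/finite_seqP => [s ->]; elim: s => [|a s [n IH]]; first by exists 0%N.
exists (maxn n (Num.truncn (enorm a)).+1) => x /=; rewrite in_cons.
move=> /orP[/eqP->|xs].
  by apply: le_trans (ltW (truncnS_gt _)) _; rewrite ler_nat leq_maxr.
by apply: le_trans (IH x xs) _; rewrite ler_nat leq_maxl.
Qed.

Variable E : set Rd.
Hypothesis lfE : Gamma E.

Lemma nondecreasing_cfg_ball_sum (a : Rd -> \bar R) : (forall y, 0 <= a y) ->
  {homo (fun n => \sum_(y \in cfg_ball E n) a y) : n m / (n <= m)%N >-> n <= m}.
Proof.
move=> a0 m n mn; apply: lee_fsum_nneg_subset; try exact: lfE.
  move=> x; rewrite !inE => -[Ex xm]; split => //.
  by apply: le_trans xm _; rewrite ler_nat.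
by move=> t _; exact: a0.
Qed.

Lemma esum_cfg_ball_lim (a : Rd -> \bar R) : (forall y, 0 <= a y) ->
  \esum_(y in E) a y = limn (fun n => \sum_(y \in cfg_ball E n) a y).
Proof.
move=> a0; have aE := nondecreasing_cfg_ball_sum a0.
rewrite (cvg_lim _ (ereal_nondecreasing_cvgn aE)) //.
apply/le_anti/andP; split; apply: ge_ereal_sup.
  move=> _ [A [finA AE] <-]; have [n An] := finite_set_enorm_bounded finA.
  apply: le_trans (ereal_sup_ubound (ex_intro2 _ _ n I erefl)).
  apply: lee_fsum_nneg_subset => //; first exact: lfE.
  by move=> x; rewrite !inE => Ax; split; [exact: AE|exact: An].
move=> _ [n _ <-]; apply: ereal_sup_ubound; exists (cfg_ball E n) => //.
by split; [exact: lfE|move=> x []].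
Qed.

Variable f : Rd -> Rd -> \bar R.
Hypotheses (mf : forall y, measurable_fun setT (f y)) (f0 : forall y x, 0 <= f y x).

Lemma measurable_esum_cfg : measurable_fun setT (fun x => \esum_(y in E) f y x).
Proof.
apply: (emeasurable_fun_cvg (fun n x => \sum_(y \in cfg_ball E n) f y x)).
  by move=> n; apply: emeasurable_fsum => //; exact: lfE.
move=> x _; rewrite (esum_cfg_ball_lim (f0 ^~ x)).
exact/ereal_nondecreasing_is_cvgn/nondecreasing_cfg_ball_sum.
Qed.

Lemma integral_esum_cfg_le (mu : {measure set Rd -> \bar R}) :
  \int[mu]_x (\esum_(y in E) f y x) <= \esum_(y in E) \int[mu]_x f y x.
Proof.
have -> : (fun x => \esum_(y in E) f y x) =
    (fun x => limn (fun n => \sum_(y \in cfg_ball E n) f y x)).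
  by apply/funext => x; exact: esum_cfg_ball_lim.
rewrite monotone_convergence //; last 3 first.
- by move=> n; apply: emeasurable_fsum => //; exact: lfE.
- by move=> n x _; exact: fsume_ge0.
- by move=> x _; exact: nondecreasing_cfg_ball_sum.
have int_fsum n : \int[mu]_x (\sum_(y \in cfg_ball E n) f y x) =
                  \sum_(y \in cfg_ball E n) \int[mu]_x f y x.
  by apply: ge0_integral_fsum => //; exact: lfE.
under eq_fun do rewrite int_fsum.
apply: lime_le.
  apply/ereal_nondecreasing_is_cvgn/nondecreasing_cfg_ball_sum => y.
  exact: integral_ge0.
apply: nearW => n; apply: ereal_sup_ubound; exists (cfg_ball E n) => //.
by split; [exact: lfE|move=> x []].
Qed.

End locally_finite_sums.

(* [K] with its junk value at [0] replaced by [0]: then [psi phi (Kpos K)]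
   vanishes on the diagonal and is measurable. *)
Definition Kpos (R : realType) (K : R -> R) (q : R) : R := if 0 < q then K q else 0.

Lemma Kpos_ge0 (R : realType) (K : R -> R) :
  (forall q, 0 < q -> 0 < K q) -> forall q, 0 <= Kpos K q.
Proof. by move=> K_gt0 q; rewrite /Kpos; case: ifPn => // /K_gt0/ltW. Qed.

Lemma measurable_Kpos (R : realType) (K : R -> R) :
  (forall q1 q2, 0 < q1 -> q1 <= q2 -> K q2 <= K q1) -> measurable_fun setT (Kpos K).
Proof.
move=> K_noninc; apply: measurable_fun_if => //; first exact: measurable_fun_ltr.
rewrite setTI (_ : _ @^-1` _ = [set q : R | 0 < q]); last first.
  by apply/seteqP; split => q /=.
apply: (measurability (@RGenCInfty.G R)) => [|/= _ [_] [r] -> <-].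
  exact: RGenCInfty.measurableE.
apply: is_interval_measurable => s t /= [s0 Ks] [t0 Kt] u /andP[su tu].
have u0 := lt_le_trans s0 su; split => //.
move: Kt; rewrite /= !in_itv /= !andbT => /le_trans; apply; exact: K_noninc.
Qed.

Section pair_interaction.
Variables (R : realType) (d : nat).
Local Notation Rd := (Rd R d).
Local Notation edist := (@Defs.edist R d).
Variables (phi : Rd -> R) (K : R -> R).
Hypotheses (phi_gt0 : forall x, 0 < phi x) (K_gt0 : forall q, 0 < q -> 0 < K q).
Local Notation psi := (psi phi K).
Local Open Scope ereal_scope.

Lemma psi_sym x y : psi x y = psi y x.
Proof. by rewrite /Defs.psi edistC [(phi x * _)%R]mulrC. Qed.

Lemma psi_ge0 x y : x <> y -> (0 <= psi x y)%R.
Proof.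
move=> xy; apply: mulr_ge0; last exact/ltW/K_gt0/edist_gt0.
by apply: mulr_ge0; exact: ltW.
Qed.

Lemma psi_Kpos x y : x <> y -> Defs.psi phi (Kpos K) x y = psi x y.
Proof. by move=> /edist_gt0 xy; rewrite /Defs.psi /Kpos xy. Qed.

Lemma psi_Kpos_ge0 x y : (0 <= Defs.psi phi (Kpos K) x y)%R.
Proof. by rewrite mulr_ge0 ?Kpos_ge0 // mulr_ge0 // ltW. Qed.

Definition interaction (E : set Rd) (x : Rd) : \bar R :=
  \esum_(y in E `\ x) (psi x y)%:E.

Definition pair_energy (E : set Rd) : \bar R := \esum_(x in E) interaction E x.

Lemma interaction_ge0 E x : 0 <= interaction E x.
Proof. by apply: esum_ge0 => y [_ yx]; rewrite lee_fin psi_ge0 // => /esym. Qed.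

Lemma pair_energy_ge0 E : 0 <= pair_energy E.
Proof. by apply: esum_ge0 => x _; exact: interaction_ge0. Qed.

Lemma Vfun_pair_energy E : Vfun phi K E = (2^-1)%:E * pair_energy E.
Proof.
rewrite /Vfun /pair_energy /interaction esum_esum; last first.
  by move=> x y _ [_ yx]; rewrite lee_fin psi_ge0 // => /esym.
congr (_ * esum _ _); apply/seteqP; split => -[x y] /=.
  by move=> [Ex [Ey xy]]; split => //; split => // /esym.
by move=> [Ex [Ey yx]]; split => //; split => // /esym.
Qed.

Lemma pair_energy_fin_num E : Vfun phi K E < +oo -> pair_energy E \is a fin_num.
Proof.
rewrite Vfun_pair_energy ge0_fin_numE ?pair_energy_ge0 //.
have := pair_energy_ge0 E; case: (pair_energy E) => [r _ _|_|//]; first exact: ltry.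
by rewrite mulry gtr0_sg ?invr_gt0 // mul1e.
Qed.

Lemma interaction_setU1 E x : ~ E x ->
  interaction (E `|` [set x]) x = \esum_(y in E) (Defs.psi phi (Kpos K) x y)%:E.
Proof.
move=> Ex; rewrite /interaction setUDK => [|y [/= -> //]].
apply: eq_esum => y Ey.
by rewrite psi_Kpos // => xy; apply: Ex; rewrite xy.
Qed.

(* Each pair containing [x] is counted twice in the ordered sum. *)
Lemma pair_energyD1 E x : E x ->
  pair_energy E = interaction E x + interaction E x + pair_energy (E `\ x).
Proof.
move=> Ex; rewrite /pair_energy (esumD1 Ex) => [|y _]; last exact: interaction_ge0.
rewrite -addeA; congr (_ + _).
rewrite (eq_esum (b := fun y => (psi x y)%:E + interaction (E `\ x) y)); last first.
  move=> y [Ey yx]; rewrite /interaction (esumD1 (x := x)); last 2 first.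
  - by split => // /esym.
  - by move=> z [_ zy]; rewrite lee_fin psi_ge0 // => /esym.
  by rewrite psi_sym; congr (_ + esum _ _); apply/seteqP; split => z /= [[]].
rewrite esumD // => y [_ yx]; last exact: interaction_ge0.
by rewrite lee_fin psi_ge0 // => /esym.
Qed.

End pair_interaction.

Section foster_lyapunov_increments.
Variables (R : realType) (d : nat).
Local Notation Rd := (Rd R d).
Variables (phi h : Rd -> R) (K : R -> R).
Hypotheses (phi_gt0 : forall x, 0 < phi x) (K_gt0 : forall q, 0 < q -> 0 < K q).
Hypothesis h_ge0 : forall x, 0 <= h x.
Local Notation W := (Wfun h phi K).
Local Notation interaction := (interaction phi K).
Local Notation pair_energy := (pair_energy phi K).
Local Open Scope ereal_scope.

Lemma pairing_ge0 E : 0 <= pairing h E.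
Proof. by apply: esum_ge0 => x _; rewrite lee_fin. Qed.

Lemma pairingD1 E x : E x -> pairing h E = (h x)%:E + pairing h (E `\ x).
Proof. by move=> Ex; rewrite /pairing (esumD1 Ex) // => y _; rewrite lee_fin. Qed.

Lemma Wfun_pair_energy E : W E = pairing h E + (2^-1)%:E * pair_energy E.
Proof. by rewrite /Wfun Vfun_pair_energy. Qed.

Lemma Wfun_setD1 E x : E x ->
  pairing h E \is a fin_num -> pair_energy E \is a fin_num ->
  W (E `\ x) - W E = - ((h x)%:E + interaction E x).
Proof.
move=> Ex; rewrite !Wfun_pair_energy (pairingD1 Ex) (pair_energyD1 phi_gt0 K_gt0 Ex).
rewrite !fin_numD => /andP[_ Hf] /andP[/andP[sf _] Sf].
rewrite -(fineK Hf) -(fineK sf) -(fineK Sf).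
do ![rewrite -EFinD|rewrite -EFinM|rewrite -EFinN]; congr EFin; lra.
Qed.

Lemma ssum_Wfun_setD1 E :
  pairing h E \is a fin_num -> pair_energy E \is a fin_num ->
  ssum E (fun x => W (E `\ x) - W E) = - (pairing h E + pair_energy E).
Proof.
move=> Hf Sf.
have incr_ge0 x : 0 <= (h x)%:E + interaction E x.
  by rewrite adde_ge0 ?lee_fin ?interaction_ge0.
rewrite /ssum esum1 => [|x Ex]; last first.
  by rewrite funeposE Wfun_setD1 // max_r // oppe_le0.
rewrite (eq_esum (b := fun x => (h x)%:E + interaction E x)) => [|x Ex].
  by rewrite esumD ?sub0e // => x _; rewrite ?lee_fin ?interaction_ge0.
by rewrite funenegE Wfun_setD1 // oppeK max_l.
Qed.

Lemma Wfun_setU1 E x : ~ E x ->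
  pairing h E \is a fin_num -> pair_energy E \is a fin_num ->
  W (E `|` [set x]) - W E = (h x)%:E + \esum_(y in E) (psi phi (Kpos K) x y)%:E.
Proof.
move=> Ex Hf Sf; have E'x : (E `|` [set x]) x by right.
have E'xE : (E `|` [set x]) `\ x = E by rewrite setUDK => // y [/= ->].
rewrite !Wfun_pair_energy (pairingD1 E'x) (pair_energyD1 phi_gt0 K_gt0 E'x).
rewrite E'xE interaction_setU1 //.
set k := esum _ _; have k_ge0 : 0 <= k by apply: esum_ge0 => y _; rewrite lee_fin psi_Kpos_ge0.
rewrite -(fineK Hf) -(fineK Sf).
have [kf|] := boolP (k \is a fin_num).
  rewrite -(fineK kf).
  do ![rewrite -EFinD|rewrite -EFinM|rewrite -EFinB]; congr EFin; lra.
rewrite ge0_fin_numE // ltey negbK => /eqP ->.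
by rewrite addye // mulry gtr0_sg ?invr_gt0 // mul1e !addey // addye.
Qed.

Lemma birth_increment_bound E x (bx bs : R) :
  pairing h E \is a fin_num -> pair_energy E \is a fin_num -> (0 <= bx <= bs)%R ->
  0 <= bx%:E * (W (E `|` [set x]) - W E) <=
       bs%:E * ((h x)%:E + \esum_(y in E) (psi phi (Kpos K) x y)%:E).
Proof.
move=> Hf Sf /andP[bx0 bxbs].
have incr_ge0 : 0 <= (h x)%:E + \esum_(y in E) (psi phi (Kpos K) x y)%:E.
  by rewrite adde_ge0 ?lee_fin // esum_ge0 // => y _; rewrite lee_fin psi_Kpos_ge0.
have [Ex|Ex] := pselect (E x); last first.
  by rewrite Wfun_setU1 // mule_ge0 ?lee_fin //= lee_pmul ?lee_fin.
have -> : E `|` [set x] = E by apply/seteqP; split => y /=; [case=> // ->|left].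
have Wf : W E \is a fin_num by rewrite Wfun_pair_energy fin_numD Hf fin_numM.
by rewrite subee // mule0 lexx /= mule_ge0 ?lee_fin // (le_trans bx0).
Qed.

End foster_lyapunov_increments.

Section birth_term.
Variables (R : realType) (d : nat).
Local Notation Rd := (Rd R d).
Local Notation edist := (@Defs.edist R d).
Variable mu : {measure set Rd -> \bar R}.
Hypotheses (d_gt0 : (0 < d)%N) (mu_leb : is_lebesgue_Rd mu).
Variables (phi h : Rd -> R) (K : R -> R).
Hypotheses (phi_gt0 : forall x, 0 < phi x) (h_ge0 : forall x, 0 <= h x).
Hypotheses (mphi : measurable_fun setT phi) (mh : measurable_fun setT h).
Hypothesis K_gt0 : forall q, 0 < q -> 0 < K q.
Hypothesis K_noninc : forall q1 q2, 0 < q1 -> q1 <= q2 -> K q2 <= K q1.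
Local Notation W := (Wfun h phi K).
Local Notation psi0 := (psi phi (Kpos K)).
Local Open Scope ereal_scope.

Lemma measurable_psi_Kpos y : measurable_fun setT (fun x => (psi0 x y)%:E).
Proof.
apply/measurable_EFinP; apply: measurable_funM.
  exact: measurable_funM mphi (measurable_cst _).
exact: measurableT_comp (measurable_Kpos K_noninc) (measurable_edist y).
Qed.

(* [C1] integrates [phi y * K (edist x y)], whose value on the diagonal is
   junk; it is harmless since Lebesgue measure does not see points. *)
Lemma integral_phi_Kpos_le_C1 y :
  \int[mu]_x (phi x * Kpos K (edist x y))%:E <= C1 mu phi K.
Proof.
apply: le_trans (ereal_sup_ubound (ex_intro _ y erefl)).
apply: (le_integral_off_point (measurable_set1_Rd y)) => //.
- exact: lebesgue_Rd_set1.
- by move=> x; rewrite lee_fin mulr_ge0 ?Kpos_ge0 ?ltW.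
- by rewrite edistxx /Kpos ltxx mulr0.
- by move=> x /edist_gt0 xy; rewrite /Kpos xy edistC.
Qed.

Lemma C1_ge0 : 0 <= C1 mu phi K.
Proof.
apply: le_trans (integral_phi_Kpos_le_C1 (nseq_tuple d 0%R)).
by apply: integral_ge0 => x _; rewrite lee_fin mulr_ge0 ?Kpos_ge0 ?ltW.
Qed.

Lemma integral_psi_Kpos_le y :
  \int[mu]_x (psi0 x y)%:E <= (phi y)%:E * C1 mu phi K.
Proof.
have -> : \int[mu]_x (psi0 x y)%:E =
          (phi y)%:E * \int[mu]_x (phi x * Kpos K (edist x y))%:E.
  rewrite -ge0_integralZl_EFin ?ltW //; last 2 first.
  - by move=> x _; rewrite lee_fin mulr_ge0 ?Kpos_ge0 ?ltW.
  - apply/measurable_EFinP/measurable_funM => //.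
    exact: measurableT_comp (measurable_Kpos K_noninc) (measurable_edist y).
  by apply: eq_integral => x _; rewrite -EFinM /Defs.psi mulrCA mulrA.
apply: lee_pmul => //; first by rewrite lee_fin ltW.
- by apply: integral_ge0 => x _; rewrite lee_fin mulr_ge0 ?Kpos_ge0 ?ltW.
- exact: integral_phi_Kpos_le_C1.
Qed.

Lemma integral_interaction_le E : Gamma E ->
  \int[mu]_x (\esum_(y in E) (psi0 x y)%:E) <= \esum_(y in E) ((phi y)%:E * C1 mu phi K).
Proof.
move=> lfE; apply: le_trans (integral_esum_cfg_le (f := fun y x => (psi0 x y)%:E) lfE _ _ mu) _.
- exact: measurable_psi_Kpos.
- by move=> y x; rewrite lee_fin psi_Kpos_ge0.
- by apply: le_esum => y _; exact: integral_psi_Kpos_le.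
Qed.

Lemma integral_birth_le E (bE : Rd -> R) (bs c : R) :
  Gamma E -> pairing h E \is a fin_num -> pair_energy phi K E \is a fin_num ->
  (forall x, 0 <= bE x <= bs)%R -> C1 mu phi K <= c%:E ->
  (forall x, 2 * c * bs * phi x <= h x)%R ->
  \int[mu]_x ((bE x)%:E * (W (E `|` [set x]) - W E)) <=
  bs%:E * \int[mu]_x (h x)%:E + (2^-1)%:E * pairing h E.
Proof.
move=> lfE Hf Sf hb hC hh.
have bs_ge0 : (0 <= bs)%R by have /andP[/le_trans] := hb (nseq_tuple d 0%R); apply.
pose k x := \esum_(y in E) (psi0 x y)%:E.
have k_ge0 x : 0 <= k x by apply: esum_ge0 => y _; rewrite lee_fin psi_Kpos_ge0.
have mk : measurable_fun setT k.
  apply: (measurable_esum_cfg (f := fun y x => (psi0 x y)%:E) lfE).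
    exact: measurable_psi_Kpos.
  by move=> y x; rewrite lee_fin psi_Kpos_ge0.
apply: le_trans (@ge0_le_integralT _ _ _ mu _ (fun x => bs%:E * ((h x)%:E + k x)) _ _) _.
- by move=> x; have /andP[] := birth_increment_bound phi_gt0 K_gt0 h_ge0 x Hf Sf (hb x).
- by move=> x; have /andP[] := birth_increment_bound phi_gt0 K_gt0 h_ge0 x Hf Sf (hb x).
have mhE : measurable_fun setT (fun x => (h x)%:E) by exact/measurable_EFinP.
rewrite ge0_integralZl_EFin //; last 2 first.
- by move=> x _; rewrite adde_ge0 ?lee_fin.
- exact: emeasurable_funD.
rewrite ge0_integralD // => [|x _]; last by rewrite lee_fin.
rewrite ge0_muleDr ?integral_ge0 // => [|x _]; last by rewrite lee_fin.
apply: leeD => //; apply: le_trans (lee_pmul _ _ (lexx _) (integral_interaction_le lfE)) _.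
- by rewrite lee_fin.
- by apply: integral_ge0 => x _; exact: k_ge0.
rewrite /pairing -!ge0_esumZl // => [|y]; last by rewrite mule_ge0 ?lee_fin ?C1_ge0 ?ltW.
apply: le_esum => y _; apply: le_trans (lee_pmul _ _ (lexx _) (lee_pmul _ _ (lexx _) hC)) _.
- by rewrite lee_fin.
- by rewrite mule_ge0 ?lee_fin ?C1_ge0 ?ltW.
- by rewrite lee_fin ltW.
- exact: C1_ge0.
by rewrite -!EFinM lee_fin; have := hh y; lra.
Qed.

End birth_term.

Lemma bsup_ge0 (R : realType) (d : nat) (eps : R) (b : Rd R d -> set (Rd R d) -> R) :
  (forall x eta, GammaG eps eta -> 0 <= b x eta) -> (0 <= bsup eps b)%E.
Proof.
move=> b_ge0; have G0 : GammaG eps set0.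
  by split; [move=> r; rewrite set0I|rewrite esum_set0].
apply: le_trans (ereal_sup_ubound _); last by exists (nseq_tuple d 0), set0.
by rewrite lee_fin b_ge0.
Qed.

Lemma foster_lyapunov_arith (R : realType) (H S J : \bar R) :
  H \is a fin_num -> S \is a fin_num -> (0 <= S)%E -> (0 <= J)%E ->
  (- (H + S) + (J + (2^-1)%:E * H) <= J - (2^-1)%:E * (H + (2^-1)%:E * S))%E.
Proof.
move=> Hf Sf S0 J0; have [Jf|] := boolP (J \is a fin_num).
  rewrite -(fineK Hf) -(fineK Sf) -(fineK Jf) in S0 *.
  rewrite lee_fin in S0.
  by do ![rewrite -EFinD|rewrite -EFinM|rewrite -EFinN|rewrite -EFinB]; rewrite lee_fin; lra.
rewrite ge0_fin_numE // ltey negbK => /eqP ->.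
have fin_neqNy v : v \is a fin_num -> v != -oo%E by rewrite fin_numE => /andP[].
rewrite addye ?addey ?addye ?leey // fin_neqNy //.
- by rewrite fin_numN fin_numM // fin_numD Hf fin_numM.
- by rewrite fin_numN fin_numD Hf Sf.
- by rewrite fin_numM.
Qed.

Theorem lemma4p10 (R : realType) (d : nat) (hd : (0 < d)%N) (eps : R) (heps : 0 < eps)
  (mu : {measure set (Rd R d) -> \bar R}) (hmu : is_lebesgue_Rd mu)
  (b : Rd R d -> set (Rd R d) -> R)
  (hb_meas : forall eta, GammaG eps eta -> measurable_fun setT (fun x => b x eta))
  (hb_ge0 : forall x eta, GammaG eps eta -> 0 <= b x eta)
  (hb_bnd : (bsup eps b < +oo)%E)
  (K : R -> R)
  (hK_pos : forall q, 0 < q -> 0 < K q)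
  (hK_noninc : forall q1 q2, 0 < q1 -> q1 <= q2 -> K q2 <= K q1)
  (hK_0 : K q @[q --> 0^'+] --> +oo)
  (hK_int : forall r, 0 < r ->
     (\int[lebesgue_measure]_(q in `[r, +oo[) (K q * q ^+ d.-1)%:E < +oo)%E)
  (phi h : Rd R d -> R)
  (hphi_meas : measurable_fun setT phi) (hh_meas : measurable_fun setT h)
  (hphi_pos : forall x, 0 < phi x) (hh_pos : forall x, 0 < h x)
  (hphi_sep : forall r : R, exists2 c : R, 0 < c & forall x, enorm x <= r -> c <= phi x)
  (hh_sep : forall r : R, exists2 c : R, 0 < c & forall x, enorm x <= r -> c <= h x)
  (hC1 : (C1 mu phi K < +oo)%E)
  (hh_lb : forall x, (2%:E * C1 mu phi K * bsup eps b * (phi x)%:E <= (h x)%:E)%E)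
  (hh_ub : forall x, h x <= Gfun eps x) :
  forall eta, Theta eps phi K eta ->
    (Lgen mu b (Wfun h phi K) eta
       <= bsup eps b * \int[mu]_x (h x)%:E - (2^-1)%:E * Wfun h phi K eta)%E.
Proof.
move=> eta [[lf Gfin] Vfin].
have h_ge0 x : 0 <= h x by exact: ltW.
have Hf : pairing h eta \is a fin_num.
  rewrite ge0_fin_numE ?pairing_ge0 //; apply: le_lt_trans Gfin.
  by apply: le_esum => x _; rewrite lee_fin.
have Sf := pair_energy_fin_num hphi_pos hK_pos Vfin.
have Bf : bsup eps b \is a fin_num by rewrite ge0_fin_numE ?bsup_ge0.
have Cf : C1 mu phi K \is a fin_num by rewrite ge0_fin_numE ?C1_ge0.
rewrite /Lgen ssum_Wfun_setD1 //.
apply: le_trans (leeD (lexx _) (integral_birth_le hd hmu hphi_pos h_ge0 hphi_meas hh_meas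
  hK_pos hK_noninc (bs := fine (bsup eps b)) (c := fine (C1 mu phi K)) lf Hf Sf _ _ _)) _.
- move=> x; rewrite hb_ge0 //= -lee_fin fineK //.
  by apply: ereal_sup_ubound; exists x, eta.
- by rewrite fineK.
- by move=> x; rewrite -lee_fin !EFinM !fineK.
rewrite (Wfun_pair_energy h hphi_pos hK_pos) (fineK Bf).
apply: foster_lyapunov_arith => //; first exact: pair_energy_ge0.
by rewrite mule_ge0 ?bsup_ge0 // integral_ge0 // => x _; rewrite lee_fin.
Qed.
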